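(* Let $\psi$ be admissible, let $Q=Q(\partial_\psi)$ be a $\partial_\psi$-delta operator with $\partial_\psi$-basic polynomial sequence $(p_n)_{n\ge0}$, and let $\hat x_{Q}$ be its dual operator. (i) For an arbitrary sequence $(q_n)_{n\ge0}$ of polynomials in one variable, $T=\sum_{n\ge0}q_n(\hat x_{Q})\,Q^n$ defines a linear operator $P\to P$ (the sum being finite on each polynomial). (ii) Conversely, for every linear operator $T:P\to P$ there exists a unique sequence $(q_n)_{n\ge0}$ of polynomials such that $T=\sum_{n\ge0}q_n(\hat x_{Q})\,Q^n$.
   Context: $\mathbf F$ is a field of characteristic zero, $P=\mathbf F[x]$, $\mathrm{End}(P)$ the algebra of linear operators on $P$. An admissible sequence is $\psi=(\psi_n)_{n\ge0}$ with $\psi_n\in\mathbf F$, $\psi_0=1$, $\psi_n\neq0$; $n_\psi=\psi_{n-1}/\psi_n$ ($n\ge1$), $0_\psi=0$, $n_\psi!=n_\psi(n-1)_\psi\cdots1_\psi$, $0_\psi!=1$. The $\psi$-derivative is $\partial_\psi x^n=n_\psi x^{n-1}$; $E^y(\partial_\psi)=\sum_{k\ge0}\frac{y^k}{k_\psi!}\partial_\psi^{\,k}$ for $y\in\mathbf F$; $\Sigma_\psi=\{T\in\mathrm{End}(P):[T,E^\alpha(\partial_\psi)]=0\ \forall\alpha\in\mathbf F\}$. A $\partial_\psi$-delta operator is $Q\in\Sigma_\psi$ with $Q(x)$ a nonzero constant; its $\partial_\psi$-basic polynomial sequence is $(p_n)$ with $\deg p_n=n$, $p_0=1$, $p_n(0)=0$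 ($n>0$), $Qp_n=n_\psi p_{n-1}$. The dual operator $\hat x_Q$ is the linear map on $P$ with $\hat x_Qp_n=\frac{n+1}{(n+1)_\psi}p_{n+1}$ ($n\ge0$). *)

From HB Require Import structures.
From mathcomp Require Import all_boot all_order all_algebra.
Set Implicit Arguments. Unset Strict Implicit. Unset Printing Implicit Defensive.
Import Order.TTheory GRing.Theory Num.Theory.
Local Open Scope ring_scope.

Section PsiDefs.
Variable F : fieldType.
Implicit Types (psi : nat -> F) (p : {poly F}).

Definition admissible psi : Prop := psi 0%N = 1 /\ forall n, psi n != 0.

Definition npsi psi (n : nat) : F :=
  if n is m.+1 then psi m / psi m.+1 else 0.

Definition psi_fact psi (n : nat) : F := \prod_(1 <= k < n.+1) npsi psi k.

(* the psi-derivative: x^n |-> n_psi x^(n-1), extended linearly *)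
Definition dpsi psi (p : {poly F}) : {poly F} :=
  \poly_(i < (size p).-1) (p`_i.+1 * npsi psi i.+1).

(* E^y(d_psi) = sum_k y^k/k_psi! d_psi^k  (terms with k >= size p vanish) *)
Definition Epsi psi (y : F) (p : {poly F}) : {poly F} :=
  \sum_(k < size p) (y ^+ k / psi_fact psi k) *: iter k (dpsi psi) p.

Definition in_Sigma psi (T : {poly F} -> {poly F}) : Prop :=
  linear T /\ forall (alpha : F) p, T (Epsi psi alpha p) = Epsi psi alpha (T p).

Definition delta_op psi (Q : {poly F} -> {poly F}) : Prop :=
  in_Sigma psi Q /\ exists c : F, c != 0 /\ Q 'X = c%:P.

Definition basic_seq psi (Q : {poly F} -> {poly F}) (pn : nat -> {poly F}) : Prop :=
  (forall n, size (pn n) = n.+1) /\ pn 0%N = 1 /\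
  (forall n, (0 < n)%N -> (pn n).[0] = 0) /\
  (forall n, Q (pn n) = npsi psi n *: pn n.-1).

Definition dual_op psi (pn : nat -> {poly F}) (X : {poly F} -> {poly F}) : Prop :=
  linear X /\
  forall n, X (pn n) = ((n.+1)%:R / npsi psi n.+1) *: pn n.+1.

Definition op_eval (q : {poly F}) (A : {poly F} -> {poly F}) (r : {poly F}) : {poly F} :=
  \sum_(i < size q) q`_i *: iter i A r.

Definition series_term (q : nat -> {poly F}) (X Q : {poly F} -> {poly F})
  (n : nat) (p : {poly F}) : {poly F} := op_eval (q n) X (iter n Q p).

(* "sum_{n>=0} q_n(X) Q^n p = t", with the sum finite (all terms beyond
   some N vanish) *)
Definition series_val (q : nat -> {poly F}) (X Q : {poly F} -> {poly F})
  (p t : {poly F}) : Prop :=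
  exists N : nat, (forall n, (N <= n)%N -> series_term q X Q n p = 0) /\
                  t = \sum_(n < N) series_term q X Q n p.

End PsiDefs.

From HB Require Import structures.
From mathcomp Require Import all_boot all_order all_algebra.
From Stdlib Require Import FunctionalExtensionality.
Import GRing.Theory.
Local Open Scope ring_scope.
Set Implicit Arguments. Unset Strict Implicit.

(* Only the "ladder" structure of the data is used: the basic sequence
   b = (p_n) has deg p_n = n, the delta operator D = Q lowers it
   (D b_n = n_psi b_(n-1), with 0_psi = 0 and n_psi <> 0 for n > 0) and the
   dual operator A = x_Q raises it (A b_n = c_n b_(n+1) with c_n <> 0, which
   is where char F = 0 is used).
   The theorem is the instance b = p_n, A = x_Q, D = Q. *)

Section LinearMaps.
Variable F : fieldType.
Implicit Types (f : {poly F} -> {poly F}).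

Lemma lin0 f : linear f -> f 0 = 0.
Proof.
move=> Lf; have := Lf 1 0 0; rewrite !scale1r addr0 => e.
by rewrite -[LHS](addrK (f 0)) -e subrr.
Qed.

Lemma linD f : linear f -> forall u v, f (u + v) = f u + f v.
Proof. by move=> Lf u v; have := Lf 1 u v; rewrite !scale1r. Qed.

Lemma linZ f : linear f -> forall a u, f (a *: u) = a *: f u.
Proof. by move=> Lf a u; have := Lf a u 0; rewrite !addr0 (lin0 Lf) addr0. Qed.

Lemma lin_sum f (I : Type) (r : seq I) (P : pred I) (G : I -> {poly F}) :
  linear f -> f (\sum_(i <- r | P i) G i) = \sum_(i <- r | P i) f (G i).
Proof. by move=> Lf; apply: (big_morph f (linD Lf) (lin0 Lf)). Qed.

Lemma lin_iter f n : linear f -> linear (iter n f).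
Proof. by move=> Lf; elim: n => [|n IH] a u v //=; rewrite IH Lf. Qed.

Lemma lin_op_eval (q : {poly F}) f : linear f -> linear (op_eval q f).
Proof.
move=> Lf a u v; rewrite /op_eval scaler_sumr -big_split /=.
by apply: eq_bigr => i _; rewrite (lin_iter i Lf) scalerDr !scalerA mulrC.
Qed.

Lemma lin_series_term (q : nat -> {poly F}) (A D : {poly F} -> {poly F}) n :
  linear A -> linear D -> linear (series_term q A D n).
Proof.
by move=> LA LD a u v; rewrite /series_term (lin_iter n LD) (lin_op_eval _ LA).
Qed.

Lemma sum_vanishing_tail (g : nat -> {poly F}) K M : (K <= M)%N ->
  (forall n, (K <= n)%N -> g n = 0) -> \sum_(n < M) g n = \sum_(n < K) g n.
Proof.
move=> leKM g0; rewrite (big_ord_widen M g leKM) [RHS]big_mkcond /=.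
by apply: eq_bigr => i _; case: ltnP => // /g0.
Qed.

Lemma op_eval_widen (q : {poly F}) f x K : (size q <= K)%N ->
  op_eval q f x = \sum_(i < K) q`_i *: iter i f x.
Proof.
move=> leqK; rewrite /op_eval [RHS](sum_vanishing_tail (g := fun i => q`_i *: iter i f x) leqK) //.
by move=> n /(nth_default 0) ->; rewrite scale0r.
Qed.

End LinearMaps.

Fixpoint tri_coord (F : fieldType) (e : nat -> {poly F}) (s : nat)
  (r : {poly F}) (k : nat) : F :=
  if s is s'.+1 then
    let c := r`_s' / lead_coef (e s') in
    if k == s' then c else tri_coord e s' (r - c *: e s') k
  else 0.

Section TriangularFamily.
Variable F : fieldType.
Variable e : nat -> {poly F}.
Hypothesis size_e : forall i, size (e i) = i.+1.

Lemma coef_tri_top i : (e i)`_i = lead_coef (e i).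
Proof. by rewrite lead_coefE size_e. Qed.

Lemma lead_tri_neq0 i : lead_coef (e i) != 0.
Proof. by rewrite lead_coef_eq0 -size_poly_eq0 size_e. Qed.

Lemma size_tri_comb s (a : nat -> F) : (size (\sum_(k < s) a k *: e k)%R <= s)%N.
Proof.
elim: s => [|s IH]; first by rewrite big_ord0 size_poly0.
rewrite big_ord_recr /=; apply: leq_trans (size_polyD _ _) _.
by rewrite geq_max (leq_trans IH) // (leq_trans (size_scale_leq _ _)) ?size_e.
Qed.

Lemma tri_comb_eq0 s (a : nat -> F) : \sum_(k < s) a k *: e k = 0 ->
  forall k, (k < s)%N -> a k = 0.
Proof.
elim: s => [|s IH] comb0 k //; rewrite big_ord_recr /= in comb0.
have a_s0 : a s = 0.
  have := congr1 (fun p : {poly F} => p`_s) comb0.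
  rewrite coefD coefZ coef0 nth_default ?size_tri_comb // add0r coef_tri_top.
  by move/eqP; rewrite mulf_eq0 (negbTE (lead_tri_neq0 s)) orbF => /eqP.
rewrite a_s0 scale0r addr0 in comb0.
by rewrite ltnS leq_eqVlt => /orP[/eqP -> // | /(IH comb0)].
Qed.

Lemma tri_decomp s (r : {poly F}) : (size r <= s)%N ->
  r = \sum_(k < s) tri_coord e s r k *: e k.
Proof.
elim: s r => [|s IH] r size_r.
  by rewrite big_ord0; apply/eqP; rewrite -size_poly_eq0 -leqn0.
rewrite big_ord_recr /= eqxx; set c := r`_s / lead_coef (e s).
have size_r' : (size (r - c *: e s)%R <= s)%N.
  have le_s1 : (size (r - c *: e s)%R <= s.+1)%N.
    apply: leq_trans (size_polyD _ _) _; rewrite geq_max size_r size_polyN.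
    by rewrite (leq_trans (size_scale_leq _ _)) ?size_e.
  have top0 : (r - c *: e s)`_s = 0.
    by rewrite coefB coefZ coef_tri_top divfK ?subrr ?lead_tri_neq0.
  apply/leq_sizeP => j; rewrite leq_eqVlt => /orP[/eqP <- // | lt_sj].
  exact: (leq_sizeP _ _ le_s1).
rewrite -[r in LHS](subrK (c *: e s)) {1}(IH _ size_r'); congr (_ + _).
by apply: eq_bigr => i _; rewrite (ltn_eqF (ltn_ord i)).
Qed.

Lemma lin_ext_tri (f g : {poly F} -> {poly F}) : linear f -> linear g ->
  (forall k, f (e k) = g (e k)) -> forall p, f p = g p.
Proof.
move=> Lf Lg fg p; rewrite (tri_decomp (leqnn (size p))) !lin_sum //.
by apply: eq_bigr => k _; rewrite (linZ Lf) (linZ Lg) fg.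
Qed.

End TriangularFamily.

Section TriangularOrbit.
Variable F : fieldType.
Variables (A : {poly F} -> {poly F}) (x : {poly F}).
Hypothesis size_orbit : forall i, size (iter i A x) = i.+1.

Definition orbit_coord (r : {poly F}) : {poly F} :=
  \poly_(i < size r) tri_coord (fun i => iter i A x) (size r) r i.

Lemma op_eval_orbit_coord r : op_eval (orbit_coord r) A x = r.
Proof.
rewrite (op_eval_widen _ _ (size_poly _ _)) [RHS](tri_decomp size_orbit (leqnn _)).
by apply: eq_bigr => i _; rewrite coef_poly ltn_ord.
Qed.

Lemma op_eval_inj q1 q2 : op_eval q1 A x = op_eval q2 A x -> q1 = q2.
Proof.
set K := maxn (size q1) (size q2).
rewrite (op_eval_widen _ _ (leq_maxl (size q1) (size q2))).
rewrite (op_eval_widen _ _ (leq_maxr (size q1) (size q2))) -/K.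
move/eqP; rewrite -subr_eq0 -sumrB => /eqP diff0.
have comb0 : \sum_(i < K) (q1`_i - q2`_i) *: iter i A x = 0.
  by rewrite -[RHS]diff0; apply: eq_bigr => i _; rewrite scalerBl.
apply/polyP => i; case: (ltnP i K) => [ltiK | leKi].
  apply/eqP; rewrite -subr_eq0; apply/eqP.
  exact: (@tri_comb_eq0 _ _ size_orbit K (fun j => q1`_j - q2`_j) comb0 i ltiK).
by rewrite !nth_default // (leq_trans _ leKi) // ?leq_maxl ?leq_maxr.
Qed.

End TriangularOrbit.

Section Ladder.
Variable F : fieldType.
Variables (b : nat -> {poly F}) (A D : {poly F} -> {poly F}) (lw rs : nat -> F).
Implicit Types (p t : {poly F}) (q : nat -> {poly F}).
Hypothesis size_b : forall n, size (b n) = n.+1.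
Hypothesis LA : linear A.
Hypothesis LD : linear D.
Hypothesis lower_b : forall n, D (b n) = lw n *: b n.-1.
Hypothesis lw0 : lw 0 = 0.
Hypothesis lwS_neq0 : forall n, lw n.+1 != 0.
Hypothesis raise_b : forall n, A (b n) = rs n *: b n.+1.
Hypothesis rs_neq0 : forall n, rs n != 0.

Lemma iter_lower_b n k : exists2 c : F, c != 0 & iter n D (b (n + k)) = c *: b k.
Proof.
elim: n k => [|n IH] k; first by exists 1; rewrite ?oner_neq0 ?scale1r.
rewrite addSnnS /=; have [c c_neq0 ->] := IH k.+1.
by exists (c * lw k.+1); rewrite ?mulf_neq0 // (linZ LD) lower_b scalerA.
Qed.

Lemma iter_raise_b i k (c : F) : c != 0 ->
  exists2 c' : F, c' != 0 & iter i A (c *: b k) = c' *: b (k + i).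
Proof.
move=> c_neq0; elim: i => [|i [c' c'_neq0 IH]]; first by exists c; rewrite ?addn0.
exists (c' * rs (k + i)); rewrite ?mulf_neq0 //=.
by rewrite IH (linZ LA) raise_b scalerA addnS.
Qed.

Lemma iter_lower_vanish p n : (size p <= n)%N -> iter n D p = 0.
Proof.
have LDn := lin_iter n LD; have LD1 := lin_iter _ LD.
move=> size_p; rewrite (tri_decomp size_b (leqnn (size p))) (lin_sum _ _ _ LDn).
apply: big1 => k _; rewrite (linZ LDn); suff -> : iter n D (b k) = 0 by rewrite scaler0.
have lt_kn : (k < n)%N := leq_trans (ltn_ord k) size_p.
have [c _ Dk] := iter_lower_b k 0; rewrite addn0 in Dk.
by rewrite -(subnK lt_kn) iterD /= Dk (linZ LD) lower_b lw0 scale0r scaler0 (lin0 (LD1 _)).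
Qed.

(* D^m b_m is a nonzero constant, so its A-orbit is triangular. *)
Lemma size_orbit_lowered m i : size (iter i A (iter m D (b m))) = i.+1.
Proof.
have [c c_neq0 Dm] := iter_lower_b m 0; rewrite addn0 in Dm.
by rewrite Dm; have [c' c'_neq0 ->] := iter_raise_b i 0 c_neq0; rewrite size_scale // size_b.
Qed.

Lemma series_term_vanish q n p : (size p <= n)%N -> series_term q A D n p = 0.
Proof. by move=> size_p; rewrite /series_term iter_lower_vanish // (lin0 (lin_op_eval _ LA)). Qed.

Definition series_sum (q : nat -> {poly F}) (p : {poly F}) : {poly F} :=
  \sum_(n < size p) series_term q A D n p.

Lemma series_sum_widen q p N : (size p <= N)%N ->
  series_sum q p = \sum_(n < N) series_term q A D n p.
Proof.
move=> size_p; symmetry; apply: (sum_vanishing_tail (g := fun n => series_term q A D n p)) => //.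
by move=> n; apply: series_term_vanish.
Qed.

Lemma series_valE q p t : series_val q A D p t <-> t = series_sum q p.
Proof.
split=> [[N [tail0 ->]] | ->]; last first.
  by exists (size p); split=> // n; apply: series_term_vanish.
rewrite (series_sum_widen _ (leq_maxr N (size p))).
by rewrite (sum_vanishing_tail (g := fun n => series_term q A D n p) (leq_maxl N (size p)) tail0).
Qed.

Lemma lin_series_sum q : linear (series_sum q).
Proof.
move=> a u v /=; set M := maxn (size u) (size v).
have size_auv : (size (a *: u + v)%R <= M)%N.
  apply: leq_trans (size_polyD _ _) _; rewrite geq_max leq_maxr andbT.
  exact: leq_trans (size_scale_leq _ _) (leq_maxl _ _).
rewrite !(series_sum_widen q _ (N := M)) ?leq_maxl ?leq_maxr //.
rewrite scaler_sumr -big_split /=; apply: eq_bigr => n _.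
exact: (lin_series_term _ n LA LD).
Qed.

Lemma series_sum_b q m : series_sum q (b m) =
  \sum_(n < m) series_term q A D n (b m) + op_eval (q m) A (iter m D (b m)).
Proof. by rewrite /series_sum size_b big_ord_recr. Qed.

Lemma series_sum_inj q1 q2 :
  (forall m, series_sum q1 (b m) = series_sum q2 (b m)) -> forall m, q1 m = q2 m.
Proof.
move=> eq12; suff eq_below m : forall n, (n < m)%N -> q1 n = q2 n.
  by move=> m; apply: (eq_below m.+1).
elim: m => // m IH n; rewrite ltnS leq_eqVlt => /orP[/eqP -> | ]; last exact: IH.
have := eq12 m; rewrite !series_sum_b.
have -> : \sum_(n < m) series_term q1 A D n (b m) = \sum_(n < m) series_term q2 A D n (b m).
  by apply: eq_bigr => i _; rewrite /series_term IH.
by move/addrI; apply: op_eval_inj; apply: size_orbit_lowered.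
Qed.

Section Representation.
Variable T : {poly F} -> {poly F}.
Hypothesis LT : linear T.

(* The coefficient following the prefix s: solve
   q(A) D^m b_m = T b_m - sum_{n<m} s_n(A) D^n b_m with m = size s. *)
Definition next_coef (s : seq {poly F}) : {poly F} :=
  let m := size s in
  orbit_coord A (iter m D (b m))
    (T (b m) - \sum_(n < m) series_term (nth 0 s) A D n (b m)).

Fixpoint rep_prefix m : seq {poly F} :=
  if m is m'.+1 then rcons (rep_prefix m') (next_coef (rep_prefix m')) else [::].

Definition rep_coef n : {poly F} := nth 0 (rep_prefix n.+1) n.

Lemma size_rep_prefix m : size (rep_prefix m) = m.
Proof. by elim: m => //= m IH; rewrite size_rcons IH. Qed.

Lemma nth_rep_prefix m n : (n < m)%N -> nth 0 (rep_prefix m) n = rep_coef n.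
Proof.
elim: m => // m IH; rewrite ltnS leq_eqVlt => /orP[/eqP -> // | lt_nm].
by rewrite /= nth_rcons size_rep_prefix lt_nm IH.
Qed.

Lemma rep_coefE m : rep_coef m = orbit_coord A (iter m D (b m))
  (T (b m) - \sum_(n < m) series_term rep_coef A D n (b m)).
Proof.
rewrite /rep_coef /= nth_rcons size_rep_prefix ltnn eqxx /next_coef size_rep_prefix.
by congr (orbit_coord _ _ (_ - _)); apply: eq_bigr => n _; rewrite /series_term nth_rep_prefix.
Qed.

(* The constructed series represents T: both sides are linear and agree
   on every b_m by the choice of q_m. *)
Lemma series_sum_rep p : series_sum rep_coef p = T p.
Proof.
apply: (lin_ext_tri size_b (lin_series_sum _) LT) => m.
rewrite series_sum_b rep_coefE op_eval_orbit_coord; first by rewrite addrC subrK.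
exact: size_orbit_lowered.
Qed.

End Representation.

End Ladder.

Theorem proposition3p3 (F : fieldType) (charF0 : [pchar F] =i pred0)
  (psi : nat -> F) (Q : {poly F} -> {poly F}) (pn : nat -> {poly F})
  (xQ : {poly F} -> {poly F}) :
  admissible psi -> delta_op psi Q -> basic_seq psi Q pn -> dual_op psi pn xQ ->
  (* (i) *)
  (forall q : nat -> {poly F},
     exists T : {poly F} -> {poly F},
       linear T /\ forall p, series_val q xQ Q p (T p)) /\
  (* (ii) *)
  (forall T : {poly F} -> {poly F}, linear T ->
     exists! q : nat -> {poly F}, forall p, series_val q xQ Q p (T p)).
Proof.
move=> [_ psi_neq0] [[LQ _] _] [size_pn [_ [_ Q_pn]]] [LX X_pn].
have npsi0 : npsi psi 0 = 0 by [].
have npsiS_neq0 n : npsi psi n.+1 != 0 by rewrite mulf_neq0 ?invr_eq0.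
have raise_neq0 n : (n.+1)%:R / npsi psi n.+1 != 0.
  by rewrite mulf_neq0 ?invr_eq0 // ((pcharf0P F).1 charF0).
have valE := series_valE size_pn LX LQ Q_pn npsi0 npsiS_neq0.
split=> [q | T LT].
  exists (series_sum xQ Q q); split=> [|p]; last exact/valE.
  exact: lin_series_sum size_pn LX LQ Q_pn npsi0 npsiS_neq0 q.
have rep := series_sum_rep size_pn LX LQ Q_pn npsi0 npsiS_neq0 X_pn raise_neq0 LT.
exists (rep_coef pn xQ Q T); split=> [p | q rep_q]; first by apply/valE; rewrite rep.
apply: functional_extensionality.
apply: (series_sum_inj size_pn LX LQ Q_pn npsiS_neq0 X_pn raise_neq0) => m.
by move/valE: (rep_q (pn m)) <-; rewrite rep.
Qed.
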